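(* In Ruleset B, for any superposition of single Nim heaps with $k=\max_{1\le j\le\ell} i_j\ge1$, \[\langle \mathrm{Nim}(i_1),\ldots,\mathrm{Nim}(i_\ell)\rangle_B\equiv\begin{cases}0 & \text{if } k=2,\\ * & \text{if } k=1,\\ *(k-1) & \text{otherwise.}\end{cases}\]
   Context: Single-heap Nim: $\mathrm{Nim}(x)$ is a heap of $x$ tokens; classical move $(1,-j)$, $j\ge1$, removes $j$ tokens and is illegal if fewer than $j$ tokens remain. Quantum variation: a position is a nonempty finite set $\langle G_1,\ldots,G_n\rangle$ of classical positions; a classical move is legal if legal in some $G_i$; a Q-move is a nonempty set of legal classical moves, leading to the superposition of all legal results of applying one of its moves to one of the $G_i$. Ruleset B (subscript $B$): only Q-moves consisting of at least two distinct classical moves are allowed, except that when the player has exactly one legal classical move overall, he may play it as an unsuperposed move. The player with no allowed Q-move loses. $\equiv$ is game equivalence, $*k$ the value of a classical Nim heap of $k$ tokens, $*=*1$, $*0=0$. *)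

From mathcomp Require Import all_boot.
Set Implicit Arguments. Unset Strict Implicit. Unset Printing Implicit Defensive.

Inductive lose (P : Type) (mv : P -> P -> Prop) : P -> Prop :=
  | lose_intro x : (forall y, mv x y -> win mv y) -> lose mv x
with win (P : Type) (mv : P -> P -> Prop) : P -> Prop :=
  | win_intro x y : mv x y -> lose mv y -> win mv x.

Definition sum_move (A B : Type) (mA : A -> A -> Prop) (mB : B -> B -> Prop)
  (p q : A * B) : Prop :=
  (mA p.1 q.1 /\ q.2 = p.2) \/ (q.1 = p.1 /\ mB p.2 q.2).

Definition nim_move (m m' : nat) : Prop := m' < m.

Definition equiv_games (A B : Type) (mA : A -> A -> Prop) (mB : B -> B -> Prop)
  (a : A) (b : B) : Prop := lose (sum_move mA mB) (a, b).

(* A quantum position <Nim(x_1),...,Nim(x_l)> is represented by the seq of heap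
   sizes [:: x_1; ...; x_l], read as a (nonempty finite) set. *)
Definition qpos := seq nat.

(* classical move (1,-j) is legal in the superposition S *)
Definition legal (S : qpos) (j : nat) : Prop := 0 < j /\ exists2 x, x \in S & j <= x.

Definition unique_legal (S : qpos) : Prop :=
  exists j, legal S j /\ forall j', legal S j' -> j' = j.

Definition qmoveB (S T : qpos) : Prop :=
  exists Q : seq nat,
    [/\ Q != [::], (forall j, j \in Q -> legal S j),
        ((exists a b, [/\ a \in Q, b \in Q & a != b]) \/ unique_legal S) &
        (forall y, y \in T <-> exists x j, [/\ x \in S, j \in Q, j <= x & y = x - j])].

(* Only the largest heap k of a superposition matters.  A Ruleset B move can
   lower it to any m < k, except that for k >= 2 it never empties the position:
   two distinct moves include one smaller than k, which leaves a nonzero heap,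
   and a unique legal move forces k = 1.  The Grundy values of this game on k
   are 0, 1, 0, 2, 3, 4, ..., and a position with Grundy value g is
   equivalent to the Nim heap *g. *)

From mathcomp Require Import all_boot.
From mathcomp Require Import zify.

Set Implicit Arguments.
Unset Strict Implicit.
Unset Printing Implicit Defensive.

Section GrundyValue.

Variables (P : Type) (mv : P -> P -> Prop) (gv rank : P -> nat).

Hypothesis rank_mv : forall x y, mv x y -> rank y < rank x.
Hypothesis gv_mv : forall x y, mv x y -> gv y <> gv x.
Hypothesis gv_mex : forall x n, n < gv x -> exists2 y, mv x y & gv y = n.

Lemma sum_nim_outcome x n :
  (n = gv x -> lose (sum_move mv nim_move) (x, n)) /\
  (n <> gv x -> win (sum_move mv nim_move) (x, n)).
Proof.
have [N] := ubnP (rank x + n); elim: N x n => // N IH x n lt_N.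
split=> [n_eq | n_ne].
  subst n; constructor=> -[y m] [[/= xy ->] | [/= -> m_lt]].
    apply: (proj2 (IH y (gv x) _)); last exact/nesym/gv_mv.
    by have := rank_mv xy; lia.
  by apply: (proj2 (IH x m _)); rewrite /nim_move in m_lt; lia.
case: (ltngtP n (gv x)) => [n_lt | n_gt | //].
  have [y xy gv_y] := gv_mex n_lt.
  apply: (@win_intro _ _ _ (y, n)); first by left.
  by apply: (proj1 (IH y n _)) => //; have := rank_mv xy; lia.
apply: (@win_intro _ _ _ (x, gv x)); first by right.
by apply: (proj1 (IH x (gv x) _)) => //; lia.
Qed.

Lemma equiv_nim_grundy x : equiv_games mv nim_move x (gv x).
Proof. exact: (proj1 (sum_nim_outcome x (gv x)) erefl). Qed.

End GrundyValue.

Local Notation hmax s := (\max_(i <- s) i).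

Lemma mem_bigmax_pos (s : seq nat) : 0 < hmax s -> hmax s \in s.
Proof.
elim: s => [|a s IH]; first by rewrite big_nil.
rewrite big_cons in_cons; case: (leqP a (hmax s)) => _; last by rewrite eqxx.
by move/IH ->; rewrite orbT.
Qed.

Lemma legal_gt0_le_max s j : legal s j -> 0 < j <= hmax s.
Proof.
case=> j_gt0 [x xs le_jx]; rewrite j_gt0.
exact: leq_trans le_jx (leq_bigmax_seq x xs isT).
Qed.

Definition qmove_result (s Q : seq nat) : qpos :=
  [seq x - j | x <- s, j <- [seq j <- Q | j <= x]].

Lemma mem_qmove_result s Q y :
  y \in qmove_result s Q <-> exists x j, [/\ x \in s, j \in Q, j <= x & y = x - j].
Proof.
split.
  case/allpairsPdep=> x [j [xs]]; rewrite mem_filter => /andP[jx jQ] ->.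
  by exists x, j.
case=> x [j [xs jQ jx ->]]; apply/allpairsPdep; exists x, j.
by rewrite mem_filter jx jQ.
Qed.

Definition max_moveB (k m : nat) : bool := (m < k) && ((1 < k) ==> (0 < m)).

Lemma qmoveB_max s t : qmoveB s t -> max_moveB (hmax s) (hmax t).
Proof.
case=> Q [Q_ne0 Q_legal Q_two T_res]; set k := hmax s.
have Q_le j : j \in Q -> 0 < j <= k by move/Q_legal/legal_gt0_le_max.
have k_gt0 : 0 < k.
  have size_Q_gt0 : 0 < size Q by rewrite lt0n size_eq0.
  by have := Q_le _ (mem_nth 0 size_Q_gt0); lia.
have ks : k \in s := mem_bigmax_pos k_gt0.
apply/andP; split.
  have : hmax t <= k.-1; last by lia.
  apply/bigmax_leqP_seq => y /T_res [x [j [xs jQ jx ->]]] _.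
  have x_le : x <= k := leq_bigmax_seq x xs isT.
  by have := Q_le j jQ; lia.
apply/implyP=> k_gt1.
have [c cQ c_lt_k] : exists2 c, c \in Q & c < k.
  case: Q_two => [[a [b [aQ bQ /eqP ne_ab]]] | [j [_ j_uniq]]].
    have a_le := Q_le a aQ; have b_le := Q_le b bQ.
    by case: (ltnP a k) => [| le_ka]; [exists a | exists b => //; lia].
  have legal_le_k i : 0 < i <= k -> legal s i.
    by case/andP=> i_gt0 le_ik; split=> //; exists k.
  have := j_uniq 1 (legal_le_k 1 _); have := j_uniq 2 (legal_le_k 2 _); lia.
apply: (bigmaxn_sup_seq (k - c)) => //; last by lia.
by apply/T_res; exists k, c; split => //; lia.
Qed.

Lemma max_moveB_qmoveB s m :
  max_moveB (hmax s) m -> exists2 t, qmoveB s t & hmax t = m.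
Proof.
case/andP=> m_lt m_pos; set k := hmax s.
have ks : k \in s by apply: mem_bigmax_pos; lia.
pose Q := [:: k - m; k].
have Q_legal j : j \in Q -> legal s j.
  by rewrite !inE => /orP[] /eqP ->; (split; [lia | exists k => //; lia]).
exists (qmove_result s Q).
  exists Q; split=> //; last exact: mem_qmove_result.
  case: (eqVneq k 1) => [k1 | k_ne1].
    right; exists k; split; first by apply: Q_legal; rewrite !inE eqxx orbT.
    by move=> j /legal_gt0_le_max; rewrite -/k; lia.
  left; exists (k - m), k; rewrite !inE !eqxx orbT; split=> //.
  by apply/eqP; move: m_pos; lia.
apply/eqP; rewrite eqn_leq; apply/andP; split.
  apply/bigmax_leqP_seq => y /mem_qmove_result [x [j [xs]]].
  rewrite !inE => /orP[] /eqP -> jx -> _;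
    by have x_le : x <= k := leq_bigmax_seq x xs isT; lia.
apply: (bigmaxn_sup_seq (k - (k - m))) => //; last by lia.
by apply/mem_qmove_result; exists k, (k - m); rewrite !inE eqxx; split => //; lia.
Qed.

Definition nimB (k : nat) : nat :=
  if k == 2 then 0 else if k == 1 then 1 else k.-1.

Lemma nimB_max_moveB k m : max_moveB k m -> nimB m <> nimB k.
Proof.
rewrite /max_moveB /nimB.
by case: m => [|[|[|m]]]; case: k => [|[|[|k]]] //=; lia.
Qed.

Lemma nimB_mex k n : n < nimB k -> exists2 m, max_moveB k m & nimB m = n.
Proof.
rewrite /max_moveB /nimB; case: k => [|[|[|k]]] //= n_lt.
  by exists 0 => //=; lia.
by case: n n_lt => [|[|n]] n_lt; [exists 2 | exists 1 | exists n.+3 => //=; lia].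
Qed.

Theorem lemma2 (s : seq nat) :
  s != [::] -> 1 <= \max_(i <- s) i ->
  equiv_games qmoveB nim_move s
    (let k := \max_(i <- s) i in
     if k == 2 then 0 else if k == 1 then 1 else k.-1).
Proof.
move=> _ _.
apply: (equiv_nim_grundy (gv := fun s => nimB (hmax s))
                         (rank := fun s => hmax s)).
- by move=> x y /qmoveB_max /andP[].
- by move=> x y /qmoveB_max /nimB_max_moveB.
- by move=> x n /nimB_mex [m /max_moveB_qmoveB [t xt <-] <-]; exists t.
Qed.
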